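(* Let $f:\mathbb{N}\to\mathbb{N}$ satisfy $f(n)/n\to0$. Then for every finite coloring of the edges of $K_\mathbb{N}$ there is a set $A\subseteq\mathbb{N}$ with $A\in\mathcal{Z}_f^+$ and a partition of $A$ into infinitely many finite sets such that all edges of $K_\mathbb{N}$ joining vertices in distinct parts have the same color (i.e. a monochromatic complete multipartite subgraph with finite parts whose vertex set is in $\mathcal{Z}_f^+$).
   Context: $\mathbb{N}=\{1,2,\dots\}$, $K_\mathbb{N}$ the complete graph on $\mathbb{N}$. $\mathcal{Z}_f$ is the ideal of sets $A\subseteq\mathbb{N}$ with $|A\cap\{1,\dots,n\}|/f(n)\to0$, and $\mathcal{Z}_f^+=\mathcal{P}(\mathbb{N})\setminus\mathcal{Z}_f$. *)

(* Vertices of K_N are the positive naturals. *)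
From Stdlib Require Import Reals Lra Lia List.
Open Scope R_scope.

Definition cnt (A : nat -> bool) (n : nat) : nat :=
  length (filter A (seq 1 n)).

Definition subN (A : nat -> bool) : Prop := forall x, A x = true -> (1 <= x)%nat.

(* A ∈ Z_f : A ⊆ N and |A ∩ {1..n}| / f(n) -> 0, written in epsilon form
   (|A ∩ {1..n}| <= eps * f(n) eventually) to avoid division by f(n) = 0. *)
Definition in_Zf (f : nat -> nat) (A : nat -> bool) : Prop :=
  subN A /\
  forall eps : R, eps > 0 -> exists N : nat, forall n : nat, (N <= n)%nat ->
    INR (cnt A n) <= eps * INR (f n).

Definition in_Zf_plus (f : nat -> nat) (A : nat -> bool) : Prop :=
  subN A /\ ~ in_Zf f A.

Definition inf_finite_partition (A : nat -> bool) (P : nat -> list nat) : Prop :=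
  (forall i, P i <> nil) /\
  (forall i j x, i <> j -> In x (P i) -> In x (P j) -> False) /\
  (forall x, A x = true <-> exists i, In x (P i)).

(* Sets of asymptotic density zero form a proper ideal on N, so some
   ultrafilter G avoids all of them.  By pigeonhole in G, every vertex x has
   a colour i_x such that G-almost every y > x satisfies c x y = i_x, and
   some colour col is i_x for G-almost every x; let B be the set of those x.
   For a finite set L of chosen vertices of B, the vertices of B joined to
   all of L in colour col form a set in G, hence of positive upper density;
   since f(n) = o(n) it contains more than f(n) points in (m, n] for some n,
   whatever m is.  Choosing these points as the next part, with m the end of
   the previous part, yields parts lying in consecutive disjoint intervals,
   all edges between distinct parts have colour col, and the union A has
   more than f(n) points below n for infinitely many n, so A is not in Z_f. *)

From Stdlib Require Import Reals Lra Lia List Classical ClassicalEpsilon.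
From mathcomp Require filter.

Local Open Scope nat_scope.

Definition ind (X : nat -> Prop) (y : nat) : bool :=
  if excluded_middle_informative (X y) then true else false.

Lemma ind_spec (X : nat -> Prop) (y : nat) : ind X y = true <-> X y.
Proof. unfold ind; destruct (excluded_middle_informative (X y)); split; congruence || tauto. Qed.

Definition tail (m : nat) (A : nat -> bool) (y : nat) : bool := (m <? y) && A y.

Lemma cnt_mono (A A' : nat -> bool) (n : nat) :
  (forall y, 1 <= y <= n -> A y = true -> A' y = true) -> cnt A n <= cnt A' n.
Proof.
  unfold cnt; intro hAA'.
  assert (hl : forall y, In y (seq 1 n) -> A y = true -> A' y = true)
    by (intros y hy; apply hAA'; apply in_seq in hy; lia).
  clear hAA'; induction (seq 1 n) as [|a l IH]; simpl; [lia|].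
  specialize (IH (fun y hy => hl y (or_intror hy))).
  destruct (A a) eqn:hA; destruct (A' a) eqn:hA'; simpl; try lia.
  rewrite (hl a (or_introl eq_refl) hA) in hA'; discriminate.
Qed.

Lemma cnt_union (A A1 A2 : nat -> bool) (n : nat) :
  (forall y, A y = true -> A1 y = true \/ A2 y = true) -> cnt A n <= cnt A1 n + cnt A2 n.
Proof.
  unfold cnt; intro hA; induction (seq 1 n) as [|a l IH]; simpl; [lia|].
  destruct (A a) eqn:h; destruct (A1 a) eqn:h1; destruct (A2 a) eqn:h2;
    simpl; try lia.
  destruct (hA a h); congruence.
Qed.

Lemma cnt_tail (A : nat -> bool) (m n : nat) : cnt A n <= m + cnt (tail m A) n.
Proof.
  unfold cnt, tail; induction n as [|n IH]; [simpl; lia|].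
  pose proof (filter_length_le A (seq 1 n)) as hle; rewrite length_seq in hle.
  rewrite seq_S, !filter_app, !length_app; cbn [Nat.add filter].
  destruct (Nat.ltb_spec m (S n)); destruct (A (S n)); simpl; lia.
Qed.

Lemma cnt_all (n : nat) : cnt (fun _ => true) n = n.
Proof. unfold cnt; rewrite filter_true; apply length_seq. Qed.

(* X has asymptotic density zero: q |X ∩ {1..n}| <= n eventually, for all q. *)
Definition null (X : nat -> Prop) : Prop :=
  forall q, exists N, forall n, N <= n -> q * cnt (ind X) n <= n.

Lemma null_sub (X Y : nat -> Prop) : (forall y, X y -> Y y) -> null Y -> null X.
Proof.
  intros hXY hY q; destruct (hY q) as [N hN]; exists N; intros n hn.
  assert (cnt (ind X) n <= cnt (ind Y) n).
  { apply cnt_mono; intros y _ hy; apply ind_spec, hXY, ind_spec, hy. }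
  specialize (hN n hn); nia.
Qed.

Lemma null_union (X Y : nat -> Prop) : null X -> null Y -> null (fun y => X y \/ Y y).
Proof.
  intros hX hY q; destruct (hX (2 * q)) as [N1 h1]; destruct (hY (2 * q)) as [N2 h2].
  exists (N1 + N2); intros n hn.
  assert (cnt (ind (fun y => X y \/ Y y)) n <= cnt (ind X) n + cnt (ind Y) n).
  { apply cnt_union; intros y hy; apply ind_spec in hy.
    destruct hy; [left|right]; apply ind_spec; assumption. }
  specialize (h1 n ltac:(lia)); specialize (h2 n ltac:(lia)); nia.
Qed.

Lemma null_initial (x : nat) : null (fun y => y <= x).
Proof.
  intro q; exists (q * x); intros n hn.
  assert (hcnt : cnt (ind (fun y => y <= x)) n <= x).
  { assert (hnone : cnt (tail x (ind (fun y => y <= x))) n <= cnt (fun _ => false) n).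
    { apply cnt_mono; unfold tail; intros y _ hy.
      apply andb_prop in hy; destruct hy as [h1 h2].
      apply Nat.ltb_lt in h1; apply ind_spec in h2; lia. }
    assert (hzero : cnt (fun _ => false) n = 0)
      by (unfold cnt; rewrite filter_false; reflexivity).
    pose proof (cnt_tail (ind (fun y => y <= x)) x n); lia. }
  nia.
Qed.

Lemma null_empty : null (fun _ => False).
Proof. apply (null_sub _ _ (fun y (h : False) => False_ind (y <= 0) h) (null_initial 0)). Qed.

Lemma not_null_full : ~ null (fun _ => True).
Proof.
  intro h; destruct (h 2) as [N hN]; specialize (hN (S N) (le_S _ _ (le_n N))).
  assert (cnt (ind (fun _ => True)) (S N) = S N).
  { rewrite <- (cnt_all (S N)) at 2; unfold cnt; f_equal; apply filter_ext.
    intro y; apply ind_spec; exact I. }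
  lia.
Qed.

Record Ultra {T : Type} (small G : (T -> Prop) -> Prop) : Prop := {
  ultra_avoids : forall X, small X -> ~ G X;
  ultra_decides : forall X, G X \/ G (fun y => ~ X y);
  ultra_meet : forall X Y, G X -> G Y -> G (fun y => X y /\ Y y);
  ultra_mono : forall X Y, (forall y, X y -> Y y) -> G X -> G Y;
  ultra_proper : ~ G (fun _ => False)
}.

(* Every proper ideal is avoided by some ultrafilter: extend the dual filter
   {X | complement of X is small} to an ultrafilter. *)
Lemma ultrafilter_avoiding {T : Type} (small : (T -> Prop) -> Prop)
  (small_empty : small (fun _ => False))
  (small_union : forall X Y, small X -> small Y -> small (fun y => X y \/ Y y))
  (small_sub : forall X Y, (forall y, X y -> Y y) -> small Y -> small X)
  (small_full : ~ small (fun _ => True)) :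
  exists G, Ultra small G.
Proof.
  set (F := fun X : T -> Prop => small (fun y => ~ X y)).
  assert (F_proper : filter.ProperFilter F).
  { constructor; [|constructor].
    - intro h; apply small_full; apply (small_sub _ _ (fun y _ hy => hy) h).
    - apply (small_sub _ _ (fun y hy => hy I) small_empty).
    - intros A B hA hB; refine (small_sub _ _ _ (small_union _ _ hA hB)).
      intros y hy; destruct (classic (A y)) as [hAy|hAy]; [right|left]; auto.
      intro hBy; apply hy; split; assumption.
    - intros A B hAB hA; refine (small_sub _ _ _ hA).
      intros y hy hAy; apply hy, hAB, hAy. }
  destruct (filter.ultraFilterLemma F_proper) as [G [G_ultra F_G]].
  pose proof (@filter.ultra_proper T G G_ultra) as G_proper.
  pose proof (@filter.filter_filter T G G_proper) as G_filter.
  assert (G_empty : ~ G (fun _ => False)) by exact (@filter.filter_not_empty T G G_proper).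
  exists G; constructor.
  - intros X hX hG.
    assert (hGc : G (fun y => ~ X y)).
    { apply F_G; exact (small_sub _ _ (fun y hy => NNPP _ hy) hX). }
    apply G_empty.
    refine (@filter.filterS T G G_filter _ _ _ (@filter.filterI T G G_filter _ _ hG hGc)).
    intros y [hXy hnXy]; exact (hnXy hXy).
  - exact (fun X => filter.in_ultra_setVsetC X G_ultra).
  - exact (@filter.filterI T G G_filter).
  - exact (@filter.filterS T G G_filter).
  - exact G_empty.
Qed.

Lemma ultra_pigeonhole {T : Type} (small G : (T -> Prop) -> Prop) (HG : Ultra small G)
  (k : nat) (Y : nat -> T -> Prop) (X : T -> Prop) :
  G X -> (forall y, X y -> exists i, i < k /\ Y i y) -> exists i, i < k /\ G (Y i).
Proof.
  revert X; induction k as [|k IH]; intros X hX hcover.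
  - exfalso; apply (ultra_proper _ _ HG); apply (ultra_mono _ _ HG X); [|exact hX].
    intros y hy; destruct (hcover y hy) as [i [hi _]]; lia.
  - destruct (ultra_decides _ _ HG (Y k)) as [hk|hk]; [exists k; auto|].
    destruct (IH (fun y => X y /\ ~ Y k y)) as [i [hi hYi]].
    + exact (ultra_meet _ _ HG _ _ hX hk).
    + intros y [hy hnk]; destruct (hcover y hy) as [i [hi hYi]].
      exists i; split; [|exact hYi].
      destruct (Nat.eq_dec i k) as [->|]; [contradiction|lia].
    + exists i; split; [lia|exact hYi].
Qed.

Lemma ultra_final_segment (G : (nat -> Prop) -> Prop) (HG : Ultra null G) (x : nat) :
  G (fun y => x < y).
Proof.
  destruct (ultra_decides _ _ HG (fun y => x < y)) as [h|h]; [exact h|].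
  exfalso; apply (ultra_avoids _ _ HG _ (null_initial x)).
  apply (ultra_mono _ _ HG _ _ (fun y hy => proj1 (Nat.nlt_ge x y) hy) h).
Qed.

Lemma eventually_below_id (f : nat -> nat)
  (hf : Un_cv (fun n => (INR (f n) / INR n)%R) 0%R) (d : nat) :
  exists N, forall n, N <= n -> d * f n < n.
Proof.
  assert (hd : (0 < INR (S d))%R) by (apply lt_0_INR; lia).
  destruct (hf (/ INR (S d))%R (Rinv_0_lt_compat _ hd)) as [N hN].
  exists (S N); intros n hn; specialize (hN n ltac:(lia)).
  unfold R_dist in hN; rewrite Rminus_0_r in hN.
  assert (hn0 : (0 < INR n)%R) by (apply lt_0_INR; lia).
  assert (hratio : (INR (f n) / INR n < / INR (S d))%R)
    by exact (Rle_lt_trans _ _ _ (RRle_abs _) hN).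
  assert (hscaled : (INR (f n) * INR (S d) < INR n)%R).
  { pose proof (Rmult_lt_compat_r _ _ _ (Rmult_lt_0_compat _ _ hn0 hd) hratio) as h.
    replace (INR (f n) / INR n * (INR n * INR (S d)))%R
      with (INR (f n) * INR (S d))%R in h by (field; lra).
    replace (/ INR (S d) * (INR n * INR (S d)))%R with (INR n) in h by (field; lra).
    exact h. }
  apply INR_lt; rewrite mult_INR, S_INR in *.
  pose proof (pos_INR (f n)); pose proof (pos_INR d); nra.
Qed.

Lemma non_null_exceeds (f : nat -> nat)
  (hf : Un_cv (fun n => (INR (f n) / INR n)%R) 0%R) (X : nat -> Prop) :
  ~ null X -> forall m, exists n, f n < cnt (tail m (ind X)) n.
Proof.
  intros hX m; apply NNPP; intro hnone; apply hX; intro q.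
  destruct (eventually_below_id f hf (2 * q)) as [N hN].
  exists (N + 2 * q * m); intros n hn.
  assert (htail : cnt (tail m (ind X)) n <= f n)
    by (apply Nat.nlt_ge; intro h; apply hnone; exists n; exact h).
  pose proof (cnt_tail (ind X) m n); specialize (hN n ltac:(lia)); nia.
Qed.

Lemma not_in_Zf (f : nat -> nat) (A : nat -> bool) :
  (forall N, exists n, N <= n /\ f n < cnt A n) -> ~ in_Zf f A.
Proof.
  intros hA [_ hsmall]; destruct (hsmall (1 / 2)%R ltac:(lra)) as [N hN].
  destruct (hA N) as [n [hn hfn]]; specialize (hN n hn).
  assert (INR (f n) + 1 <= INR (cnt A n))%R by (rewrite <- S_INR; apply le_INR; exact hfn).
  pose proof (pos_INR (f n)); lra.
Qed.

Definition admissible (B : nat -> Prop) (c : nat -> nat -> nat) (col : nat)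
  (L : list nat) (y : nat) : Prop :=
  B y /\ forall x, In x L -> x < y /\ c x y = col.

Section UltrafilterColouring.

Variable G : (nat -> Prop) -> Prop.
Hypothesis HG : Ultra null G.
Variables (k : nat) (c : nat -> nat -> nat).
Hypothesis hc : forall x y, 1 <= x -> x < y -> c x y < k.

Lemma vertex_colour (x : nat) :
  1 <= x -> exists i, i < k /\ G (fun y => x < y /\ c x y = i).
Proof.
  intro hx.
  apply (ultra_pigeonhole _ _ HG k _ _ (ultra_final_segment G HG x)).
  intros y hy; exists (c x y); split; [exact (hc x y hx hy)|split; [exact hy|reflexivity]].
Qed.

Lemma colour_class_in_ultra :
  exists col (B : nat -> Prop),
    forall L, (forall x, In x L -> B x) -> G (admissible B c col L).
Proof.
  destruct (choice (fun x i => 1 <= x -> i < k /\ G (fun y => x < y /\ c x y = i)))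
    as [colour hcolour].
  { intro x; destruct (Nat.le_gt_cases 1 x) as [hx|hx].
    - destruct (vertex_colour x hx) as [i hi]; exists i; auto.
    - exists 0; intro; lia. }
  destruct (ultra_pigeonhole _ _ HG k (fun i x => 1 <= x /\ colour x = i) _
              (ultra_final_segment G HG 0)) as [col [_ hB]].
  { intros y hy; exists (colour y); split; [apply hcolour; lia|split; [lia|reflexivity]]. }
  exists col, (fun x => 1 <= x /\ colour x = col).
  induction L as [|a L IH]; intros hL.
  - refine (ultra_mono _ _ HG _ _ _ hB).
    intros y hy; split; [exact hy|intros x []].
  - destruct (hL a (or_introl eq_refl)) as [ha hcol].
    pose proof (proj2 (hcolour a ha)) as hGa; rewrite hcol in hGa.
    refine (ultra_mono _ _ HG _ _ _
              (ultra_meet _ _ HG _ _ (IH (fun x hx => hL x (or_intror hx))) hGa)).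
    intros y [[hBy hLy] hay]; split; [exact hBy|].
    intros x [<-|hx]; [exact hay|exact (hLy x hx)].
Qed.

End UltrafilterColouring.

Section GreedyPartition.

Variables (f : nat -> nat) (B : nat -> Prop) (c : nat -> nat -> nat) (col : nat).

Definition block (L : list nat) (m n : nat) : list nat :=
  filter (tail m (ind (admissible B c col L))) (seq 1 n).

Hypothesis blocks_exist :
  forall L m, (forall x, In x L -> B x) -> exists n, f n < length (block L m n).

Definition next (L : list nat) (m : nat) : nat :=
  epsilon (inhabits 0) (fun n => f n < length (block L m n)).

(* Stage j: the vertices chosen in parts 0..j-1, and the end of part j-1. *)
Fixpoint stage (j : nat) : list nat * nat :=
  match j with
  | O => (nil, 0)
  | S j' =>
      let L := fst (stage j') in
      let m := snd (stage j') in
      (L ++ block L m (next L m), next L m)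
  end.

Definition part (j : nat) : list nat :=
  block (fst (stage j)) (snd (stage j)) (next (fst (stage j)) (snd (stage j))).

Lemma block_In (L : list nat) (m n y : nat) :
  In y (block L m n) <-> 1 <= y <= n /\ m < y /\ admissible B c col L y.
Proof.
  unfold block, tail; rewrite filter_In, in_seq, Bool.andb_true_iff, Nat.ltb_lt, ind_spec.
  split; intros [h1 h2]; split; lia || tauto.
Qed.

Lemma next_large (L : list nat) (m : nat) :
  (forall x, In x L -> B x) -> f (next L m) < length (block L m (next L m)).
Proof.
  intro hL; exact (epsilon_spec (inhabits 0) (fun n => f n < length (block L m n))
                     (blocks_exist L m hL)).
Qed.

Lemma next_gt (L : list nat) (m : nat) : (forall x, In x L -> B x) -> m < next L m.
Proof.
  intro hL; pose proof (next_large L m hL) as hlarge.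
  destruct (block L m (next L m)) as [|y l] eqn:hblock; [simpl in hlarge; lia|].
  assert (hy : In y (block L m (next L m))) by (rewrite hblock; left; reflexivity).
  apply block_In in hy; lia.
Qed.

Lemma stage_in_B (j x : nat) : In x (fst (stage j)) -> B x.
Proof.
  induction j as [|j IH]; [intros []|].
  simpl; intro hx; apply in_app_or in hx; destruct hx as [hx|hx]; [exact (IH hx)|].
  apply block_In in hx; apply hx.
Qed.

Lemma stage_end (j : nat) : j <= snd (stage j).
Proof.
  induction j as [|j IH]; [simpl; lia|].
  pose proof (next_gt (fst (stage j)) (snd (stage j)) (stage_in_B j)); simpl; lia.
Qed.

Lemma part_large (j : nat) : f (snd (stage (S j))) < length (part j).
Proof. exact (next_large _ _ (stage_in_B j)). Qed.

Lemma part_in_stage (i j x : nat) : i < j -> In x (part i) -> In x (fst (stage j)).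
Proof.
  induction j as [|j IH]; intros hij hx; [lia|].
  simpl; apply in_or_app; destruct (Nat.eq_dec i j) as [->|hne]; [right; exact hx|].
  left; apply IH; [lia|exact hx].
Qed.

Lemma parts_ordered (i j x y : nat) :
  i < j -> In x (part i) -> In y (part j) -> x < y /\ c x y = col.
Proof.
  intros hij hx hy; apply block_In in hy; destruct hy as [_ [_ [_ hy]]].
  exact (hy x (part_in_stage i j x hij hx)).
Qed.

Definition union_of_parts : nat -> bool := ind (fun x => exists j, In x (part j)).

Lemma union_of_parts_dense (N : nat) :
  exists n, N <= n /\ f n < cnt union_of_parts n.
Proof.
  exists (snd (stage (S N))); split; [pose proof (stage_end (S N)); lia|].
  eapply Nat.lt_le_trans; [apply part_large|].
  apply cnt_mono; intros y hy hblock; apply ind_spec; exists N.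
  unfold part, block; apply filter_In; split; [apply in_seq; simpl in *; lia|exact hblock].
Qed.

Lemma greedy_partition :
  exists (A : nat -> bool) (P : nat -> list nat),
    in_Zf_plus f A /\ inf_finite_partition A P /\
    forall i j x y, i <> j -> In x (P i) -> In y (P j) -> x < y -> c x y = col.
Proof.
  exists union_of_parts, part; split; [split|split; [split; [|split]|]].
  - intros x hx; apply ind_spec in hx; destruct hx as [j hj]; apply block_In in hj; lia.
  - exact (not_in_Zf f union_of_parts union_of_parts_dense).
  - intros j hj; pose proof (part_large j) as hlarge; rewrite hj in hlarge; simpl in hlarge; lia.
  - intros i j x hij hi hj; destruct (Nat.lt_gt_cases i j) as [[hlt|hlt] _]; [exact hij| |].
    + pose proof (parts_ordered i j x x hlt hi hj); lia.
    + pose proof (parts_ordered j i x x hlt hj hi); lia.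
  - intro x; apply ind_spec.
  - intros i j x y hij hx hy hxy; destruct (Nat.lt_gt_cases i j) as [[hlt|hlt] _]; [exact hij| |].
    + exact (proj2 (parts_ordered i j x y hlt hx hy)).
    + pose proof (parts_ordered j i y x hlt hy hx); lia.
Qed.

End GreedyPartition.

Local Open Scope R_scope.

(* A finite coloring of the edges {x,y} (1 <= x < y) of K_N is c with
   c x y < k for x < y; only the values c x y with x < y are used. *)
Theorem mainTheorem18 (f : nat -> nat)
  (hf : Un_cv (fun n => INR (f n) / INR n) 0)
  (k : nat) (c : nat -> nat -> nat)
  (hc : forall x y, (1 <= x)%nat -> (x < y)%nat -> (c x y < k)%nat) :
  exists (A : nat -> bool) (P : nat -> list nat) (col : nat),
    in_Zf_plus f A /\ inf_finite_partition A P /\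
    forall i j x y, i <> j -> In x (P i) -> In y (P j) -> (x < y)%nat ->
      c x y = col.
Proof.
  destruct (ultrafilter_avoiding null null_empty null_union null_sub not_null_full)
    as [G HG].
  destruct (colour_class_in_ultra G HG k c hc) as [col [B hB]].
  assert (blocks : forall L m, (forall x, In x L -> B x) ->
                     exists n, (f n < length (block B c col L m n))%nat).
  { intros L m hL; apply (non_null_exceeds f hf).
    intro hnull; exact (ultra_avoids _ _ HG _ hnull (hB L hL)). }
  destruct (greedy_partition f B c col blocks) as [A [P [hA [hP hedges]]]].
  exists A, P, col; auto.
Qed.
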